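(* For every $b>1$, every $b'$ with $1\le b'<b$, and every positive integer $n$, there is an instance with $n+2$ vertices in which $C_o(s)=1$ while the partially naive agent with true bias $b$ and believed bias $b'$, with ties in its choices broken in favor of edges not leading directly to $t$, incurs cost $b^n$. In particular, optimistic partially naive agents can have cost ratio exponential in the number of vertices.
   Context: An instance is a finite directed acyclic graph $G=(V,E)$ with nonnegative edge costs $c(u,v)$, start node $s$ and target node $t$, where $t$ is the unique node with no outgoing edges; $C_o(u)$ is the minimum cost of a $u$–$t$ path. For a parameter $\beta$, the sophisticated agent with bias $\beta$ is defined by $C^{\beta}(t)=0$ and, for $u\ne t$, $S^\beta(u)\in\arg\min_{v:(u,v)\in E}(\beta\,c(u,v)+C^\beta(v))$, $C^\beta(u)=c(u,S^\beta(u))+C^\beta(S^\beta(u))$. Let $C_s'=C^{b'}$. The partially naive agent with true bias $b$ and believed bias $b'$: $C_p(t)=0$, and for $u\neq t$, $S_p(u)\in\arg\min_{v:(u,v)\in E}(b\,c(u,v)+C_s'(v))$, $C_p(u)=c(u,S_p(u))+C_p(S_p(u))$; its incurred cost is $C_p(s)$. It is called optimistic if $b'<b$. *)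

From HB Require Import structures.
From mathcomp Require Import all_boot all_order all_algebra.
From mathcomp Require Import reals.
Set Implicit Arguments. Unset Strict Implicit. Unset Printing Implicit Defensive.
Import Order.TTheory GRing.Theory Num.Theory.
Local Open Scope ring_scope.

Section Agents.
Variables (R : realType) (V : finType).
Implicit Types (E : rel V) (c : V -> V -> R) (s t u : V) (p : seq V).

Definition acyclic E : Prop :=
  forall u p, p != [::] -> path E u p -> last u p != u.

Definition is_instance E c (s t : V) : Prop :=
  [/\ acyclic E,
      (forall u, (forall v, ~~ E u v) <-> u = t)
    & (forall u v, E u v -> 0 <= c u v)].

Fixpoint path_cost c (u : V) p : R :=
  match p with
  | [::] => 0
  | v :: p' => c u v + path_cost c v p'
  end.

Definition is_path_to E (t u : V) p : bool := path E u p && (last u p == t).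

Definition opt_cost_is E c (t u : V) (x : R) : Prop :=
  (exists p, is_path_to E t u p /\ path_cost c u p = x) /\
  (forall p, is_path_to E t u p -> x <= path_cost c u p).

Definition soph_agent E c (t : V) (beta : R) (S : V -> V) (C : V -> R) : Prop :=
  C t = 0 /\
  forall u, u != t ->
    [/\ E u (S u),
        (forall v, E u v -> beta * c u (S u) + C (S u) <= beta * c u v + C v)
      & C u = c u (S u) + C (S u)].

(* (Sp, Cp) is a partially naive agent with true bias b, whose beliefs about
   its future behaviour are given by the sophisticated cost function Cs' *)
Definition pnaive_agent E c (t : V) (b : R) (Cs' : V -> R)
    (Sp : V -> V) (Cp : V -> R) : Prop :=
  Cp t = 0 /\
  forall u, u != t ->
    [/\ E u (Sp u),
        (forall v, E u v -> b * c u (Sp u) + Cs' (Sp u) <= b * c u v + Cs' v)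
      & Cp u = c u (Sp u) + Cp (Sp u)].

Definition tie_break_away_from_t E c (t : V) (b : R) (Cs' : V -> R)
    (Sp : V -> V) : Prop :=
  forall u, u != t -> Sp u = t ->
    forall v, E u v -> v != t -> b * c u t + Cs' t < b * c u v + Cs' v.

End Agents.

(* The instance is a ladder 0 -> 1 -> ... -> n of free edges, where every rung
   u may also exit to t at cost b^u.  Exiting now costs b^u, whereas the
   sophisticated belief about exiting one rung later is b^(u+1) = b * b^u: with
   true bias b the two are tied at every rung, so the agent breaking ties away
   from t climbs the whole ladder and pays b^n, while a sophisticated agent
   with bias b' < b exits at once, and the optimal path exits at rung 0 for
   cost 1.  Both agents are determined by backward induction along the ladder. *)
From HB Require Import structures.
From mathcomp Require Import all_boot all_order all_algebra.
From mathcomp Require Import reals.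
From mathcomp Require Import zify lra.
Set Implicit Arguments. Unset Strict Implicit. Unset Printing Implicit Defensive.
Import Order.TTheory GRing.Theory Num.Theory.
Local Open Scope ring_scope.

Section PathBounds.
Variables (R : realType) (V : finType) (E : rel V).

Lemma acyclic_of_rank (f : V -> nat) :
  (forall u v, E u v -> (f u < f v)%N) -> acyclic E.
Proof.
move=> rankE.
have rank_last u p : path E u p -> (f u + size p <= f (last u p))%N.
  elim: p u => [|v p IHp] u /=; first by rewrite addn0.
  by move=> /andP[/rankE lt_uv /IHp]; lia.
move=> u [|v p] // _ /rank_last; apply: contraTneq => -> /=; lia.
Qed.

Lemma path_cost_ge_potential (c : V -> V -> R) (phi : V -> R) u p :
  (forall x y, E x y -> phi x <= c x y + phi y) ->
  path E u p -> phi u <= path_cost c u p + phi (last u p).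
Proof.
move=> phiE; elim: p u => [|v p IHp] u /=; first by rewrite add0r.
move=> /andP[/phiE le_uv /IHp le_v]; rewrite -addrA.
by apply: (le_trans le_uv); rewrite lerD2l.
Qed.

End PathBounds.

Section Ladder.
Variables (R : realType) (b : R) (n : nat).

Local Notation sink := (@ord_max n.+1).

Definition next (u : 'I_n.+2) : 'I_n.+2 := inord u.+1.

Definition ladder_edge : rel 'I_n.+2 :=
  fun u v => (u != sink) && ((v == next u) || (v == sink)).

Definition ladder_cost (u v : 'I_n.+2) : R := if v == sink then b ^+ u else 0.

Definition exit_cost (u : 'I_n.+2) : R := if u == sink then 0 else b ^+ u.

Definition ladder_naive_cost (u : 'I_n.+2) : R := if u == sink then 0 else b ^+ n.

Lemma neq_sink (u : 'I_n.+2) : (u != sink) = (u < n.+1)%N.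
Proof. by rewrite ltn_neqAle -ltnS ltn_ord andbT -(inj_eq val_inj). Qed.

Lemma ord0_neq_sink : ord0 != sink.
Proof. by rewrite neq_sink. Qed.

Lemma next_val (u : 'I_n.+2) : u != sink -> next u = u.+1 :> nat.
Proof. by rewrite neq_sink => lt_u; rewrite inordK. Qed.

Lemma ladder_edge_lt (u v : 'I_n.+2) : ladder_edge u v -> (u < v)%N.
Proof.
by move=> /andP[ne_u /orP[/eqP->|/eqP->]]; rewrite ?next_val // -neq_sink.
Qed.

Lemma ladder_edge_sink (u : 'I_n.+2) : u != sink -> ladder_edge u sink.
Proof. by move=> ne_u; rewrite /ladder_edge ne_u eqxx orbT. Qed.

Lemma ladder_edge_next (u : 'I_n.+2) : u != sink -> ladder_edge u (next u).
Proof. by move=> ne_u; rewrite /ladder_edge ne_u eqxx. Qed.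

Lemma ladder_edge_nonsink (u v : 'I_n.+2) :
  ladder_edge u v -> v != sink -> v = next u.
Proof. by move=> /andP[_ /orP[/eqP-> //|->]]. Qed.

Lemma next_eq_sink (u : 'I_n.+2) : u != sink -> next u = sink -> u = n :> nat.
Proof.
by move=> ne_u next_sink; have := next_val ne_u; rewrite next_sink /=; lia.
Qed.

Lemma ladder_down_ind (P : 'I_n.+2 -> Prop) :
  P sink -> (forall u, u != sink -> P (next u) -> P u) -> forall u, P u.
Proof.
move=> P_sink P_next.
suff ind k (u : 'I_n.+2) : (n.+1 - u <= k)%N -> P u.
  by move=> u; apply: (ind (n.+1 - u)%N).
elim: k u => [|k IHk] u le_k.
  suff -> : u = sink by [].
  by apply: val_inj => /=; have := ltn_ord u; lia.
have [-> //|ne_u] := eqVneq u sink.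
have next_u := next_val ne_u.
by apply: P_next ne_u (IHk _ _); rewrite next_u; lia.
Qed.

(* [exit_cost] will turn out to be the sophisticated agent's cost function, so
   this is the value of each edge for an agent of any bias. *)
Lemma ladder_biased_value (beta : R) (u v : 'I_n.+2) : ladder_edge u v ->
  beta * ladder_cost u v + exit_cost v = (if v == sink then beta else b) * b ^+ u.
Proof.
move=> uv; rewrite /ladder_cost /exit_cost.
have [_|ne_v] := eqVneq v sink; first by rewrite addr0.
rewrite mulr0 add0r (ladder_edge_nonsink uv ne_v) next_val ?exprS //.
by case/andP: uv.
Qed.

Lemma ladder_instance : 0 <= b -> is_instance ladder_edge ladder_cost ord0 sink.
Proof.
move=> b_ge0; split.
- exact: acyclic_of_rank ladder_edge_lt.
- move=> u; split=> [no_edge|-> v]; last by rewrite /ladder_edge eqxx.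
  by apply/eqP; apply: contraT => /ladder_edge_sink; rewrite (negPf (no_edge _)).
- by move=> u v _; rewrite /ladder_cost; case: ifP => _; rewrite ?exprn_ge0.
Qed.

Lemma ladder_opt_cost : 1 <= b -> opt_cost_is ladder_edge ladder_cost sink ord0 1.
Proof.
move=> b_ge1; split.
  exists [:: sink].
  rewrite /is_path_to /= ladder_edge_sink ?ord0_neq_sink // eqxx.
  by rewrite /ladder_cost eqxx addr0 expr0.
move=> p /andP[walk /eqP last_p].
have := path_cost_ge_potential (c := ladder_cost) (phi := exit_cost) _ walk.
rewrite last_p /exit_cost eqxx (negPf ord0_neq_sink) expr0 addr0; apply=> x y xy.
rewrite -(mul1r (ladder_cost x y)) ladder_biased_value //.
rewrite /exit_cost (negPf (proj1 (andP xy))) ler_peMl ?exprn_ge0 //; first lra.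
by case: eqP => _; lra.
Qed.

Lemma ladder_soph_agent (b' : R) : 0 <= b -> b' <= b ->
  soph_agent ladder_edge ladder_cost sink b' (fun=> sink) exit_cost.
Proof.
move=> b_ge0 le_b'b; split=> [|u ne_u]; first by rewrite /exit_cost eqxx.
split; first exact: ladder_edge_sink.
  move=> v uv; rewrite !ladder_biased_value ?ladder_edge_sink // eqxx.
  by rewrite ler_wpM2r ?exprn_ge0 //; case: eqP.
by rewrite /ladder_cost /exit_cost eqxx (negPf ne_u) addr0.
Qed.

Lemma soph_agent_ladder_cost (b' : R) (S' : 'I_n.+2 -> 'I_n.+2) C' :
  0 < b -> b' < b -> soph_agent ladder_edge ladder_cost sink b' S' C' ->
  C' =1 exit_cost.
Proof.
move=> b_gt0 lt_b'b [C'_sink soph].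
have C'_sinkE : C' sink = exit_cost sink by rewrite C'_sink /exit_cost eqxx.
apply: ladder_down_ind => // u ne_u IH.
have [uS min_S ->] := soph u ne_u.
have [S_sink|ne_S] := eqVneq (S' u) sink.
  by rewrite S_sink C'_sink /ladder_cost /exit_cost eqxx (negPf ne_u) addr0.
have := min_S _ (ladder_edge_sink ne_u).
have S_next := ladder_edge_nonsink uS ne_S.
rewrite S_next in uS ne_S *.
rewrite IH C'_sinkE !ladder_biased_value ?ladder_edge_sink // (negPf ne_S) eqxx.
by rewrite ler_pM2r ?exprn_gt0 // => le_bb'; lra.
Qed.

Lemma ladder_naive_agent :
  pnaive_agent ladder_edge ladder_cost sink b exit_cost next ladder_naive_cost /\
  tie_break_away_from_t ladder_edge ladder_cost sink b exit_cost next.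
Proof.
split.
  split=> [|u ne_u]; first by rewrite /ladder_naive_cost eqxx.
  split; first exact: ladder_edge_next.
    by move=> v uv; rewrite !ladder_biased_value ?ladder_edge_next // !if_same.
  rewrite /ladder_naive_cost /ladder_cost (negPf ne_u).
  have [next_sink|ne_next] := eqVneq (next u) sink; last by rewrite add0r.
  by rewrite addr0 (next_eq_sink ne_u next_sink).
move=> u _ next_sink v uv ne_v.
by move: (ne_v); rewrite (ladder_edge_nonsink uv ne_v) next_sink eqxx.
Qed.

Lemma naive_agent_ladder_cost (Cs' : 'I_n.+2 -> R) Sp Cp :
  Cs' =1 exit_cost ->
  pnaive_agent ladder_edge ladder_cost sink b Cs' Sp Cp ->
  tie_break_away_from_t ladder_edge ladder_cost sink b Cs' Sp ->
  Cp =1 ladder_naive_cost.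
Proof.
move=> Cs'E [Cp_sink naive] tie.
apply: ladder_down_ind => [|u ne_u IH].
  by rewrite Cp_sink /ladder_naive_cost eqxx.
have [uS _ ->] := naive u ne_u.
rewrite /ladder_naive_cost (negPf ne_u).
have [S_sink|ne_S] := eqVneq (Sp u) sink.
  have [next_sink|ne_next] := eqVneq (next u) sink.
    rewrite S_sink Cp_sink /ladder_cost eqxx addr0.
    by rewrite (next_eq_sink ne_u next_sink).
  have := tie u ne_u S_sink _ (ladder_edge_next ne_u) ne_next.
  rewrite !Cs'E !ladder_biased_value ?ladder_edge_sink ?ladder_edge_next //.
  by rewrite !if_same ltxx.
have S_next := ladder_edge_nonsink uS ne_S.
rewrite S_next in ne_S *.
by rewrite IH /ladder_naive_cost /ladder_cost !(negPf ne_S) add0r.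
Qed.

End Ladder.

Theorem mainTheorem11 (R : realType) (b b' : R) (n : nat) :
  1 < b -> 1 <= b' -> b' < b -> (0 < n)%N ->
  exists (V : finType) (E : rel V) (c : V -> V -> R) (s t : V),
    [/\ #|V| = n.+2,
        is_instance E c s t,
        opt_cost_is E c t s 1,
        (exists (S' : V -> V) (C' : V -> R) (Sp : V -> V) (Cp : V -> R),
           [/\ soph_agent E c t b' S' C',
               pnaive_agent E c t b C' Sp Cp
             & tie_break_away_from_t E c t b C' Sp])
      & (forall (S' : V -> V) (C' : V -> R) (Sp : V -> V) (Cp : V -> R),
           soph_agent E c t b' S' C' ->
           pnaive_agent E c t b C' Sp Cp ->
           tie_break_away_from_t E c t b C' Sp ->
           Cp s = b ^+ n)].
Proof.
move=> b_gt1 _ lt_b'b _.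
exists 'I_n.+2, (@ladder_edge n), (@ladder_cost R b n), ord0, ord_max; split.
- exact: card_ord.
- by apply: ladder_instance; lra.
- by apply: ladder_opt_cost; lra.
- have [naive tie] := ladder_naive_agent b n.
  exists (fun=> ord_max), (@exit_cost R b n), (@next n),
    (@ladder_naive_cost R b n).
  by split=> //; apply: ladder_soph_agent; lra.
- move=> S' C' Sp Cp soph naive tie.
  have C'E : C' =1 @exit_cost R b n by apply: soph_agent_ladder_cost soph; lra.
  by rewrite (naive_agent_ladder_cost C'E naive tie) /ladder_naive_cost
    (negPf (ord0_neq_sink n)).
Qed.
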